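(* For $n,i\in\mathbb{N}=\{1,2,\dots\}$, $$\int_{-\infty}^{\infty}\frac{|t|^i}{i!}|h_n(t)|\,dt\le\frac{1}{\sqrt{2^n\,n!\,i!\,\sqrt{\pi}}}.$$
   Context: $H_n$ denotes the $n$-th Hermite polynomial ($H_n(t)=(-1)^ne^{t^2}\frac{d^n}{dt^n}e^{-t^2}$, so $H_0=1$, $H_1(t)=2t$, $H_2(t)=4t^2-2$), and the Hermite functions are $h_n(t)=\frac{1}{2^nn!\sqrt{\pi}}e^{-t^2}H_n(t)$, $t\in\mathbb{R}$. *)

From HB Require Import structures.
From mathcomp Require Import all_boot all_order all_algebra.
From mathcomp Require Import all_classical all_reals all_analysis.
Set Implicit Arguments. Unset Strict Implicit. Unset Printing Implicit Defensive.
Import Order.TTheory GRing.Theory Num.Theory.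
Local Open Scope ring_scope.

Definition hermiteH (R : realType) (n : nat) (t : R) : R :=
  (-1) ^+ n * expR (t ^+ 2) * derive1n n (fun s : R => expR (- s ^+ 2)) t.

Definition hermite_fun (R : realType) (n : nat) (t : R) : R :=
  expR (- t ^+ 2) * hermiteH n t / (2 ^+ n * n`!%:R * Num.sqrt pi).

(* Write h_n = P_n e^{-t^2} with P_n = H_n / (2^n n! sqrt pi) and
   |t|^i / i! = |Q(t)| with Q = X^i / i!.  Cauchy-Schwarz for the weight e^{-t^2}
   (in its AM-GM form) bounds the integral by the square root of
   (int Q^2 e^{-t^2}) (int P_n^2 e^{-t^2}).  Moving the n derivatives of the
   Rodrigues formula onto H_n by integration by parts gives
   int H_n^2 e^{-t^2} = 2^n n! sqrt pi, hence int P_n^2 e^{-t^2} = 1/(2^n n! sqrt pi),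
   while the moment recursion M_{j+1} <= (2j+1)/2 M_j gives
   int t^(2i) e^{-t^2} <= i! sqrt pi / 2 <= i!, hence int Q^2 e^{-t^2} <= 1/i!.
   The integrations by parts are done on [-k, k], where the boundary terms vanish as
   k -> oo because e^{-t^2} beats every polynomial; monotone convergence then passes
   to the whole line. *)

From HB Require Import structures.
From mathcomp Require Import all_boot all_order all_algebra.
From mathcomp Require Import all_classical all_reals all_analysis.
From mathcomp Require Import ring lra measurable_realfun.
Import Order.TTheory GRing.Theory Num.Theory.
Import numFieldNormedType.Exports.
Local Open Scope ring_scope.

Section gauss_poly.
Context {R : realType}.
Implicit Types (p q : {poly R}) (x : R).

Definition pgauss p x : R := p.[x] * gauss_fun x.

Definition gauss_deriv p : {poly R} := p^`() - p * 'X *+ 2.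

Definition gauss_poly (n : nat) : {poly R} := iter n gauss_deriv 1.

Lemma is_derive_gauss_fun x : is_derive x 1 gauss_fun (- (x *+ 2) * gauss_fun x).
Proof.
have hsq : is_derive x 1 (fun s : R => - s ^+ 2) (- (x *+ 2)).
  by apply: is_derive_eq; rewrite /GRing.scale /= mulr1 -mulr2n.
have := is_derive1_comp (is_derive_expR _) hsq.
by rewrite mulrC.
Qed.

Lemma is_derive_pgauss p x : is_derive x 1 (pgauss p) (pgauss (gauss_deriv p) x).
Proof.
have := @is_deriveM _ _ (horner p) gauss_fun x 1 _ _ _ (is_derive_gauss_fun x).
move=> ?; apply: is_derive_eq.
have expand a d e : a *: (x *- 2 * e) + e *: d = (d - (a * x + a * x)) * e.
  by rewrite /GRing.scale /=; ring.
by rewrite /pgauss /gauss_deriv !hornerE; apply: expand.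
Qed.

Lemma horner_mul_pgauss q p x : q.[x] * pgauss p x = pgauss (q * p) x.
Proof. by rewrite /pgauss hornerM mulrA. Qed.

Lemma pgaussZ a p x : pgauss (a *: p) x = a * pgauss p x.
Proof. by rewrite /pgauss hornerZ mulrA. Qed.

Lemma pgauss_sqr_ge0 p x : 0 <= pgauss (p ^+ 2) x.
Proof. by rewrite /pgauss horner_exp mulr_ge0 ?sqr_ge0 ?gauss_fun_ge0. Qed.

Lemma pgauss_mul_sqr p q x :
  pgauss (p * q) x ^+ 2 = pgauss (p ^+ 2) x * pgauss (q ^+ 2) x.
Proof. by rewrite /pgauss !horner_exp hornerM; ring. Qed.

Lemma derivable_pgauss p x : derivable (pgauss p) x 1.
Proof. by have [] := is_derive_pgauss p x. Qed.

Lemma continuous_pgauss p : continuous (pgauss p).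
Proof.
by move=> x; apply: differentiable_continuous; apply/derivable1_diffP;
  exact: derivable_pgauss.
Qed.

Lemma derive1n_gauss_fun n : derive1n n gauss_fun = pgauss (gauss_poly n).
Proof.
elim: n => [|n IH]; first by apply/funext => x; rewrite /pgauss hornerC mul1r.
apply/funext => x; rewrite derive1nS IH derive1E.
by have ? := is_derive_pgauss (gauss_poly n) x; rewrite derive_val.
Qed.

Lemma size_gauss_poly n : (size (gauss_poly n) <= n.+1)%N.
Proof.
elim: n => [|n IH] /=; first by rewrite size_poly1.
set p := gauss_poly n; rewrite /gauss_deriv.
apply: leq_trans (size_polyD _ _) _; rewrite size_polyN geq_max.
have [->|p0] := eqVneq p 0; first by rewrite deriv0 mul0r mul0rn size_poly0.
apply/andP; split; first exact: leq_trans (ltnW (lt_size_deriv p0)) (leqW IH).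
by rewrite mulr2n; apply: leq_trans (size_polyD _ _) _; rewrite maxnn size_mulX.
Qed.

Lemma derivn_gauss_poly n : (gauss_poly n)^`(n) = ((-2) ^+ n * n`!%:R)%:P.
Proof.
elim: n => [|n IH]; first by rewrite derivn0 expr0 mul1r.
rewrite [gauss_poly _]/= /gauss_deriv derivnB derivnMn -derivSn.
rewrite derivn_poly0; last exact: leq_trans (size_gauss_poly n) _.
rewrite -[gauss_poly n * 'X]addr0 derivnMXaddC.
rewrite (derivn_poly0 (size_gauss_poly n)) mul0r addr0 IH sub0r.
rewrite -!polyCMn -polyCN; congr _%:P.
by rewrite factS natrM exprS; ring.
Qed.

Lemma hermiteHE n x : hermiteH n x = (-1) ^+ n * (gauss_poly n).[x].
Proof.
rewrite /hermiteH derive1n_gauss_fun /pgauss /gauss_fun.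
have e : expR (x ^+ 2) * expR (- x ^+ 2) = 1 by rewrite -expRD subrr expR0.
by rewrite -[RHS]mulr1 -e; ring.
Qed.
End gauss_poly.

Section pgauss_decay.
Context {R : realType}.
Local Open Scope classical_set_scope.
Implicit Types (p : {poly R}) (x : R).

Lemma normr_le1Dsqr x : `|x| <= 1 + x ^+ 2.
Proof. by rewrite -real_normK ?num_real //; have := normr_ge0 x; nra. Qed.

Lemma horner_le_sum_coef p x :
  `|p.[x]| <= (\sum_(i < size p) `|p`_i|) * (1 + x ^+ 2) ^+ size p.
Proof.
have y1 : 1 <= 1 + x ^+ 2 by rewrite lerDl sqr_ge0.
rewrite horner_coef mulr_suml; apply: le_trans (ler_norm_sum _ _ _) _.
apply: ler_sum => i _; rewrite normrM normrX; apply: ler_wpM2l => //.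
apply: le_trans (ler_weXn2l y1 (ltnW (ltn_ord i))).
by rewrite lerXn2r ?nnegrE ?normr_le1Dsqr // (le_trans ler01 y1).
Qed.

(* With [y = 1 + x^2], [S] the sum of the |coefficients| and [m = size p]:
   [|p.[x]| e^{-x^2} <= S y^m e^{1-y}] and [y^(m+1) <= (m+1)! e^y]. *)
Lemma pgauss_le p :
  exists2 C : R, 0 <= C & forall x, `|pgauss p x| <= C / (1 + x ^+ 2).
Proof.
set S := \sum_(i < size p) `|p`_i|; set m := size p.
have S0 : 0 <= S by rewrite sumr_ge0.
exists (S * m.+1`!%:R * expR 1); first by rewrite !mulr_ge0 ?expR_ge0.
move=> x; set y := 1 + x ^+ 2.
have y0 : 0 < y by rewrite ltr_pwDl ?sqr_ge0.
have gE : gauss_fun x = expR 1 / expR y.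
  by rewrite -expRB /y opprD addrA subrr add0r.
have pow_le_exp : y ^+ m.+1 <= m.+1`!%:R * expR y.
  rewrite -ler_pdivrMl ?ltr0n ?fact_gt0 // mulrC.
  by have := expR_ge1Dxn m (ltW y0); lra.
rewrite /pgauss normrM (ger0_norm (gauss_fun_ge0 _)) gE.
apply: le_trans (_ : S * y ^+ m * (expR 1 / expR y) <= _).
  by rewrite ler_wpM2r ?divr_ge0 ?expR_ge0 ?horner_le_sum_coef.
rewrite -(ler_pM2r (mulr_gt0 y0 (expR_gt0 y))).
have -> : S * y ^+ m * (expR 1 / expR y) * (y * expR y) = S * expR 1 * y ^+ m.+1.
  by rewrite exprS; field; rewrite gt_eqF ?expR_gt0.
have -> : S * m.+1`!%:R * expR 1 / y * (y * expR y) =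
    S * expR 1 * (m.+1`!%:R * expR y).
  by field; rewrite gt_eqF.
by rewrite ler_wpM2l ?mulr_ge0 ?expR_ge0.
Qed.

Lemma cvg_pgauss p (u : nat -> R) : (forall k, k.+1%:R <= `|u k|) ->
  pgauss p (u k) @[k --> \oo] --> 0.
Proof.
move=> u_ge; have [C C0 pC] := pgauss_le p.
have hC : C * harmonic k @[k --> \oo] --> (0 : R).
  by rewrite -(mulr0 C); apply: cvgM; [exact: cvg_cst | exact: cvg_harmonic].
have hCN : - (C * harmonic k) @[k --> \oo] --> (0 : R).
  by rewrite -oppr0; exact: cvgN.
apply: (squeeze_cvgr _ hCN hC); apply: nearW => k.
rewrite -ler_norml; apply: le_trans (pC _) _; rewrite ler_wpM2l //=.
have k1 : 1 <= k.+1%:R :> R by rewrite ler1n.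
have uk := u_ge k; rewrite lef_pV2 ?posrE ?ltr0n // ?ltr_pwDl ?sqr_ge0 //.
by rewrite -real_normK ?num_real //; nra.
Qed.
End pgauss_decay.

Section symseg.
Context {R : realType}.
Local Open Scope classical_set_scope.
Local Notation mu := (@lebesgue_measure R).
Implicit Types (f : R -> R) (k : nat).

Definition symseg k : set R := `[- k.+1%:R, k.+1%:R].

Lemma measurable_symseg k : measurable (symseg k).
Proof. exact: measurable_itv. Qed.

Lemma symseg_nondecreasing : {homo symseg : m n / (m <= n)%N >-> (m <= n)%O}.
Proof.
move=> m n mn; apply/subsetPset => x; rewrite /symseg /= !in_itv /= => /andP[xm mx].
have : m.+1%:R <= n.+1%:R :> R by rewrite ler_nat.
by move=> h; apply/andP; split; lra.
Qed.

Lemma bigcup_symseg : \bigcup_k symseg k = setT.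
Proof.
apply/seteqP; split => // x _; exists (Num.truncn `|x|) => //=.
have /ltr_normlP[] := truncnS_gt `|x|.
by rewrite /symseg /= in_itv /= => h1 h2; apply/andP; split; lra.
Qed.

Lemma integrable_symseg f k : continuous f -> mu.-integrable (symseg k) (EFin \o f).
Proof.
move=> cf; apply: continuous_compact_integrable; first exact: segment_compact.
exact: continuous_subspaceT.
Qed.

Lemma Rintegral_symsegZl f c k : continuous f ->
  \int[mu]_(x in symseg k) (c * f x) = c * \int[mu]_(x in symseg k) f x.
Proof.
by move=> cf; rewrite RintegralZl //; [exact: measurable_symseg | exact: integrable_symseg].
Qed.

Lemma Rintegral_symsegE f k : continuous f ->
  (\int[mu]_(x in symseg k) f x)%:E = (\int[mu]_(x in symseg k) (f x)%:E)%E.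
Proof.
move=> cf; rewrite fineK //; apply: integrable_fin_num; first exact: measurable_symseg.
exact: integrable_symseg.
Qed.

Section nonneg.
Variable f : R -> R.
Hypotheses (cf : continuous f) (f0 : forall x, 0 <= f x).

Lemma cvg_Rintegral_symseg :
  (\int[mu]_(x in symseg k) f x)%:E @[k --> \oo] --> (\int[mu]_(x in setT) (f x)%:E)%E.
Proof.
under eq_fun do rewrite Rintegral_symsegE //.
rewrite -bigcup_symseg; apply: ge0_nondecreasing_set_cvg_integral.
- exact: symseg_nondecreasing.
- exact: measurable_symseg.
- move=> k; apply/measurable_EFinP; apply: measurable_funTS.
  exact: continuous_measurable_fun.
- by move=> k x _; rewrite lee_fin.
Qed.

Lemma Rintegral_symseg_le k :
  ((\int[mu]_(x in symseg k) f x)%:E <= \int[mu]_(x in setT) (f x)%:E)%E.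
Proof.
rewrite Rintegral_symsegE //; apply: ge0_subset_integral => //.
- exact: measurable_symseg.
- apply/measurable_EFinP; exact: continuous_measurable_fun.
- by move=> x _; rewrite lee_fin.
Qed.

Lemma integralT_le_symseg A : (forall k, \int[mu]_(x in symseg k) f x <= A) ->
  (\int[mu]_(x in setT) (f x)%:E <= A%:E)%E.
Proof.
move=> fA; apply: cvge_le cvg_Rintegral_symseg.
by apply: nearW => k; rewrite lee_fin.
Qed.

Lemma integralT_symseg l : \int[mu]_(x in symseg k) f x @[k --> \oo] --> l ->
  (\int[mu]_(x in setT) (f x)%:E)%E = l%:E.
Proof.
move=> fl; apply: (cvg_unique _ cvg_Rintegral_symseg) => //=.
apply: cvg_EFin; [exact: nearW | exact: fl].
Qed.

End nonneg.

Lemma cvg_Rintegral_symseg_gauss :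
  \int[mu]_(x in symseg k) gauss_fun x @[k --> \oo] --> Num.sqrt pi.
Proof.
have := cvg_Rintegral_symseg _ continuous_gauss_fun gauss_fun_ge0.
by rewrite integralT_gauss => /fine_cvg.
Qed.

Lemma Rintegral_symseg_gauss_le k : \int[mu]_(x in symseg k) gauss_fun x <= Num.sqrt pi.
Proof.
rewrite -lee_fin -integralT_gauss.
exact: Rintegral_symseg_le _ continuous_gauss_fun gauss_fun_ge0 k.
Qed.
End symseg.

Section gauss_integration_by_parts.
Context {R : realType}.
Local Open Scope classical_set_scope.
Local Notation mu := (@lebesgue_measure R).
Implicit Types (p q : {poly R}) (k n : nat).

Lemma derivable_oo_LRcontinuousT (f : R -> R) a b :
  (forall x, derivable f x 1) -> derivable_oo_LRcontinuous f a b.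
Proof.
move=> df; have cf : continuous f.
  by move=> x; apply: differentiable_continuous; apply/derivable1_diffP.
split; first by move=> x _; exact: df.
- exact/cvg_at_right_filter/cf.
- exact/cvg_at_left_filter/cf.
Qed.

Lemma continuous_exprn_gauss m : continuous (fun x : R => x ^+ m * gauss_fun x).
Proof.
have -> : (fun x : R => x ^+ m * gauss_fun x) = pgauss 'X^m.
  by apply/funext => x; rewrite /pgauss hornerXn.
exact: continuous_pgauss.
Qed.

Lemma Rintegral_symseg_by_parts q p k :
  \int[mu]_(x in symseg k) (q.[x] * pgauss (gauss_deriv p) x) =
  q.[k.+1%:R] * pgauss p k.+1%:R - q.[- k.+1%:R] * pgauss p (- k.+1%:R) -
  \int[mu]_(x in symseg k) (q^`().[x] * pgauss p x).
Proof.
apply: Rintegration_by_parts.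
- by rewrite gtrN ?ltr0n.
- exact/continuous_subspaceT/continuous_horner.
- by apply: derivable_oo_LRcontinuousT => x; exact: derivable_horner.
- by move=> x _; rewrite derivE.
- exact/continuous_subspaceT/continuous_pgauss.
- by apply: derivable_oo_LRcontinuousT => x; exact: derivable_pgauss.
- by move=> x _; have ? := is_derive_pgauss p x; rewrite derive1E derive_val.
Qed.

Lemma cvg_symseg_boundary q p :
  q.[k.+1%:R] * pgauss p k.+1%:R - q.[- k.+1%:R] * pgauss p (- k.+1%:R)
    @[k --> \oo] --> (0 : R).
Proof.
under eq_fun do rewrite !horner_mul_pgauss.
rewrite -[0 : R]subr0; apply: cvgB; apply: cvg_pgauss => k.
- by rewrite ger0_norm.
- by rewrite normrN ger0_norm.
Qed.

Lemma cvg_Rintegral_symseg_gauss_poly n q l :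
  \int[mu]_(x in symseg k) pgauss (q^`(n)) x @[k --> \oo] --> l ->
  \int[mu]_(x in symseg k) (q.[x] * pgauss (gauss_poly n) x) @[k --> \oo] -->
    (-1) ^+ n * l.
Proof.
elim: n q l => [|n IH] q l ql.
  rewrite expr0 mul1r; under eq_fun do under eq_Rintegral do
    rewrite /pgauss hornerC mul1r.
  by move: ql; rewrite derivn0.
under eq_fun do rewrite Rintegral_symseg_by_parts.
rewrite exprS mulN1r mulNr -(sub0r ((-1) ^+ n * l)).
apply: cvgB; first exact: cvg_symseg_boundary.
by apply: IH; under eq_fun do rewrite -derivSn.
Qed.

Definition hermite_sqnorm n : R := 2 ^+ n * n`!%:R * Num.sqrt pi.

Lemma hermite_sqnorm_gt0 n : 0 < hermite_sqnorm n.
Proof. by rewrite !mulr_gt0 ?exprn_gt0 ?ltr0n ?fact_gt0 ?sqrtr_gt0 ?pi_gt0. Qed.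

Lemma cvg_Rintegral_symseg_gauss_poly_sqr n :
  \int[mu]_(x in symseg k) pgauss (gauss_poly n ^+ 2) x @[k --> \oo] -->
    hermite_sqnorm n.
Proof.
have -> : hermite_sqnorm n = (-1) ^+ n * ((-2) ^+ n * n`!%:R * Num.sqrt pi).
  by rewrite /hermite_sqnorm !mulrA -exprMn mulN1r opprK.
under eq_fun do under eq_Rintegral do rewrite expr2 -horner_mul_pgauss.
apply: cvg_Rintegral_symseg_gauss_poly.
under eq_fun do under eq_Rintegral do rewrite derivn_gauss_poly /pgauss hornerC.
under eq_fun do rewrite (Rintegral_symsegZl _ _ _ continuous_gauss_fun).
by apply: cvgM; [exact: cvg_cst | exact: cvg_Rintegral_symseg_gauss].
Qed.

(* Integrate x^(2j+1) against (e^{-x^2})' = -2x e^{-x^2}; the boundary term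
   2 a^(2j+1) e^{-a^2} is nonnegative. *)
Lemma Rintegral_symseg_moment_succ_le j k :
  \int[mu]_(x in symseg k) (x ^+ j.+1.*2 * gauss_fun x) <=
  (j.*2.+1)%:R / 2 * \int[mu]_(x in symseg k) (x ^+ j.*2 * gauss_fun x).
Proof.
have := Rintegral_symseg_by_parts 'X^(j.*2.+1) 1 k.
have -> : \int[mu]_(x in symseg k) (('X^(j.*2.+1)).[x] * pgauss (gauss_deriv 1) x) =
    -2 * \int[mu]_(x in symseg k) (x ^+ j.+1.*2 * gauss_fun x).
  rewrite -Rintegral_symsegZl; last exact: continuous_exprn_gauss.
  apply: eq_Rintegral => x _.
  rewrite /pgauss /gauss_deriv derivC sub0r mul1r hornerN hornerMn hornerX hornerXn.
  by rewrite doubleS !exprS; ring.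
have -> : \int[mu]_(x in symseg k) ((('X^(j.*2.+1))^`()).[x] * pgauss 1 x) =
    (j.*2.+1)%:R * \int[mu]_(x in symseg k) (x ^+ j.*2 * gauss_fun x).
  rewrite -Rintegral_symsegZl; last exact: continuous_exprn_gauss.
  apply: eq_Rintegral => x _.
  by rewrite /pgauss derivXn hornerMn hornerXn hornerC mul1r -mulr_natl mulrA.
have bnd_ge0 : 0 <= ('X^(j.*2.+1)).[k.+1%:R] * pgauss 1 k.+1%:R -
    ('X^(j.*2.+1)).[- k.+1%:R] * pgauss 1 (- k.+1%:R) :> R.
  rewrite /pgauss /gauss_fun !hornerXn !hornerC sqrrN exprNn -signr_odd oddS odd_double.
  rewrite expr1 mulN1r mulNr opprK.
  by rewrite addr_ge0 // !mulr_ge0 ?expR_ge0 ?exprn_ge0.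
lra.
Qed.

Lemma Rintegral_symseg_moment_le j k : (0 < j)%N ->
  \int[mu]_(x in symseg k) (x ^+ j.*2 * gauss_fun x) <= j`!%:R / 2 * Num.sqrt pi.
Proof.
case: j => // j _; elim: j => [|j IH].
  apply: le_trans (Rintegral_symseg_moment_succ_le 0 k) _.
  under eq_Rintegral do rewrite expr0 mul1r.
  by rewrite mul1r ler_wpM2l ?Rintegral_symseg_gauss_le.
apply: le_trans (Rintegral_symseg_moment_succ_le j.+1 k) _.
apply: le_trans (ler_wpM2l _ IH) _; first by rewrite divr_ge0.
have ratio_le : (j.+1.*2.+1)%:R / 2 <= j.+2%:R :> R.
  by rewrite ler_pdivrMr // -natrM ler_nat muln2 (doubleS j.+1).
have Fs_ge0 : 0 <= j.+1`!%:R * Num.sqrt pi :> R by rewrite mulr_ge0 ?sqrtr_ge0.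
rewrite (factS j.+1) natrM; nra.
Qed.
End gauss_integration_by_parts.

Lemma le_amgm_weighted (R : realFieldType) (l f u v : R) : 0 < l -> 0 <= f ->
  0 <= u -> 0 <= v -> f ^+ 2 <= u * v -> f <= l / 2 * u + (2 * l)^-1 * v.
Proof.
move=> l0 f0 u0 v0 fuv; rewrite -(ler_pM2l (mulr_gt0 (ltr0Sn _ 1) l0)).
have -> : 2 * l * (l / 2 * u + (2 * l)^-1 * v) = l ^+ 2 * u + v.
  by field; rewrite gt_eqF.
have sq_le : (2 * l * f) ^+ 2 <= (l ^+ 2 * u + v) ^+ 2.
  rewrite -subr_ge0.
  have -> : (l ^+ 2 * u + v) ^+ 2 - (2 * l * f) ^+ 2 =
      (l ^+ 2 * u - v) ^+ 2 + 4 * (l ^+ 2 * (u * v - f ^+ 2)) by ring.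
  apply: addr_ge0; first exact: sqr_ge0.
  by rewrite mulr_ge0 // mulr_ge0 ?sqr_ge0 // subr_ge0.
have lf0 : 0 <= 2 * l * f by rewrite !mulr_ge0 // ltW.
have rhs0 : 0 <= l ^+ 2 * u + v by apply: addr_ge0 => //; exact: mulr_ge0 (sqr_ge0 _) u0.
by rewrite -ler_sqr ?nnegrE.
Qed.

Section integral_le_sqrt.
Context {d} {T : measurableType d} {R : realType} {mu : {measure set T -> \bar R}}.
Context {D : set T} {f u v : T -> R} {A B : R}.
Hypotheses (uA : (\int[mu]_(x in D) (u x)%:E <= A%:E)%E)
  (vB : (\int[mu]_(x in D) (v x)%:E <= B%:E)%E) (A0 : 0 < A) (B0 : 0 < B).
Hypotheses (mD : measurable D) (mf : measurable_fun D f)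
  (mu_ : measurable_fun D u) (mv : measurable_fun D v).
Hypotheses (f0 : forall x, D x -> 0 <= f x) (u0 : forall x, D x -> 0 <= u x)
  (v0 : forall x, D x -> 0 <= v x) (fuv : forall x, D x -> f x ^+ 2 <= u x * v x).

(* Integrate [f <= (l u + v / l) / 2] with the optimal weight [l = sqrt (B / A)]. *)
Lemma ge0_integral_le_sqrt :
  (\int[mu]_(x in D) (f x)%:E <= (Num.sqrt (A * B))%:E)%E.
Proof.
pose l := Num.sqrt B / Num.sqrt A.
have l0 : 0 < l by rewrite divr_gt0 ?sqrtr_gt0.
pose a := l / 2; pose b := (2 * l)^-1.
have a0 : 0 <= a by rewrite divr_ge0 ?ltW.
have b0 : 0 <= b by rewrite invr_ge0 mulr_ge0 ?ltW.
have amgm x : D x -> f x <= a * u x + b * v x.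
  by move=> Dx; apply: le_amgm_weighted; [| exact: f0 | exact: u0 | exact: v0 | exact: fuv].
have meu : measurable_fun D (fun x => (u x)%:E) by exact/measurable_EFinP.
have mev : measurable_fun D (fun x => (v x)%:E) by exact/measurable_EFinP.
have mau := measurable_funeM a%:E meu.
have mbv := measurable_funeM b%:E mev.
apply: (@le_trans _ _ (\int[mu]_(x in D) (a%:E * (u x)%:E + b%:E * (v x)%:E))%E).
  by apply: ge0_le_integral => //; [exact/measurable_EFinP | exact: emeasurable_funD].
rewrite ge0_integralD //; last 2 first.
- by move=> x Dx; rewrite mule_ge0 // lee_fin u0.
- by move=> x Dx; rewrite mule_ge0 // lee_fin v0.
rewrite !ge0_integralZl_EFin //.
apply: le_trans (leeD (lee_wpmul2l _ uA) (lee_wpmul2l _ vB)) _; rewrite ?lee_fin //.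
suff -> : a * A + b * B = Num.sqrt (A * B) by [].
rewrite -{1}(sqr_sqrtr (ltW A0)) -{1}(sqr_sqrtr (ltW B0)) sqrtrM ?ltW // /a /b /l.
by field; rewrite !gt_eqF ?sqrtr_gt0.
Qed.
End integral_le_sqrt.

Section pgauss_cauchy_schwarz.
Context {R : realType}.
Local Open Scope classical_set_scope.
Local Notation mu := (@lebesgue_measure R).

Lemma integralT_norm_pgauss_mul_le {p q : {poly R}} {A B : R} :
  (\int[mu]_(t in setT) (pgauss (p ^+ 2) t)%:E <= A%:E)%E ->
  (\int[mu]_(t in setT) (pgauss (q ^+ 2) t)%:E <= B%:E)%E -> 0 < A -> 0 < B ->
  (\int[mu]_(t in setT) `|pgauss (p * q) t|%:E <= (Num.sqrt (A * B))%:E)%E.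
Proof.
move=> pA qB A0 B0; apply: (ge0_integral_le_sqrt pA qB) => //.
- apply: measurableT_comp; first exact: normr_measurable.
  exact: continuous_measurable_fun (continuous_pgauss _).
- exact: continuous_measurable_fun (continuous_pgauss _).
- exact: continuous_measurable_fun (continuous_pgauss _).
- by move=> t _; exact: pgauss_sqr_ge0.
- by move=> t _; exact: pgauss_sqr_ge0.
- by move=> t _; rewrite real_normK ?num_real // pgauss_mul_sqr.
Qed.
End pgauss_cauchy_schwarz.

Section hermite_fun.
Context {R : realType}.
Local Open Scope classical_set_scope.
Local Notation mu := (@lebesgue_measure R).

Lemma sqrt_pi_le2 : Num.sqrt (pi : R) <= 2.
Proof.
rewrite -(ger0_norm (ler0n R 2)) -sqrtr_sqr ler_sqrt ?sqr_ge0 //.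
by have := @pihalf_lt2 R; lra.
Qed.

Definition hermite_fun_poly n : {poly R} :=
  ((-1) ^+ n / hermite_sqnorm n) *: gauss_poly n.

Lemma hermite_funE n : hermite_fun n = pgauss (hermite_fun_poly n).
Proof.
apply/funext => t; rewrite /hermite_fun hermiteHE pgaussZ /pgauss /gauss_fun.
by rewrite /hermite_sqnorm; ring.
Qed.

Lemma integralT_pgauss_hermite_fun_poly_sqr n :
  (\int[mu]_(t in setT) (pgauss (hermite_fun_poly n ^+ 2) t)%:E)%E =
  (hermite_sqnorm n)^-1%:E.
Proof.
set c := hermite_sqnorm n; have c0 : 0 < c := hermite_sqnorm_gt0 n.
apply: integralT_symseg; [exact: continuous_pgauss | exact: pgauss_sqr_ge0 |].
under eq_fun do under eq_Rintegral do rewrite exprZn pgaussZ.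
under eq_fun do rewrite (Rintegral_symsegZl _ _ _ (continuous_pgauss _)).
have sq : ((-1) ^+ n / c) ^+ 2 = c ^- 2.
  by rewrite exprMn -exprM mulnC exprM sqrrN !expr1n mul1r exprVn.
under eq_fun do rewrite sq.
have -> : c^-1 = c ^- 2 * c by field; rewrite gt_eqF.
by apply: cvgM; [exact: cvg_cst | exact: cvg_Rintegral_symseg_gauss_poly_sqr].
Qed.

Lemma integralT_pgauss_moment_le i : (0 < i)%N ->
  (\int[mu]_(t in setT) (pgauss ((i`!%:R^-1 *: 'X^i) ^+ 2) t)%:E <=
   (i`!%:R^-1)%:E)%E.
Proof.
move=> i0; have f0 : 0 < i`!%:R :> R by rewrite ltr0n fact_gt0.
apply: integralT_le_symseg => [|x|k]; [exact: continuous_pgauss | exact: pgauss_sqr_ge0 |].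
under eq_Rintegral do rewrite exprZn pgaussZ /pgauss -exprM muln2 hornerXn.
rewrite (Rintegral_symsegZl _ _ _ (continuous_exprn_gauss _)).
apply: le_trans (ler_wpM2l _ (Rintegral_symseg_moment_le i k i0)) _.
  by rewrite sqr_ge0.
have -> : i`!%:R^-1 ^+ 2 * (i`!%:R / 2 * Num.sqrt pi) = i`!%:R^-1 * (Num.sqrt pi / 2) :> R.
  by field; rewrite gt_eqF.
rewrite -[X in _ <= X]mulr1; apply: ler_wpM2l; first by rewrite invr_ge0 ltW.
by rewrite ler_pdivrMr // mul1r sqrt_pi_le2.
Qed.
End hermite_fun.

Theorem proposition3p1 (R : realType) (n i : nat) :
  (0 < n)%N -> (0 < i)%N ->
  (\int[@lebesgue_measure R]_(t in [set: R])
      ((`|t| ^+ i / i`!%:R) * `|hermite_fun n t|)%:E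
   <= (1 / Num.sqrt (2 ^+ n * n`!%:R * i`!%:R * Num.sqrt pi))%:E)%E.
Proof.
(* The bound also holds for [n = 0]. *)
move=> _ i0.
have f0 : 0 < i`!%:R :> R by rewrite ltr0n fact_gt0.
have c0 : 0 < hermite_sqnorm n :> R := hermite_sqnorm_gt0 n.
pose p : {poly R} := i`!%:R^-1 *: 'X^i.
have FE (t : R) :
    `|t| ^+ i / i`!%:R * `|hermite_fun n t| = `|pgauss (p * hermite_fun_poly n) t|.
  rewrite hermite_funE -horner_mul_pgauss [in RHS]normrM /p hornerZ hornerXn.
  rewrite [in RHS]normrM normrX ger0_norm ?invr_ge0 ?ltW //.
  by rewrite [i`!%:R^-1 * _]mulrC.
under eq_integral do rewrite FE.
have hq : (\int[@lebesgue_measure R]_(t in [set: R])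
    (pgauss (hermite_fun_poly n ^+ 2) t)%:E <= (hermite_sqnorm n)^-1%:E)%E.
  by rewrite integralT_pgauss_hermite_fun_poly_sqr.
apply: le_trans (integralT_norm_pgauss_mul_le (integralT_pgauss_moment_le _ i0) hq _ _) _;
  rewrite ?invr_gt0 //.
have -> : 2 ^+ n * n`!%:R * i`!%:R * Num.sqrt pi = i`!%:R * hermite_sqnorm n :> R.
  by rewrite /hermite_sqnorm; ring.
by rewrite lee_fin -invfM (sqrtrV (mulr_ge0 (ltW f0) (ltW c0))) div1r.
Qed.
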